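(* Let $d\ge 1$, $\sigma>0$, and let $A_0,A_1\in\mathbb{R}^{d\times d}$ be constant matrices (not assumed to commute). Let $Z:\mathbb{R}\to\mathbb{R}^{d\times d}$ be the function defined in the context. Then \[ \dot Z(\vartheta)=A_0Z(\vartheta-\sigma)+Z(\vartheta-\sigma)A_1\qquad\text{for all }\vartheta\in(-\infty,\infty), \] where at the points $\vartheta=k\sigma$, $k\in\{-1,0,1,2,\dots\}$, the derivative $\dot Z(\vartheta)$ is understood as the right-hand derivative.
   Context: $\Theta$ and $I$ denote the $d\times d$ zero and identity matrices. Define matrices $Q_{r+1}(r\sigma)$, $r=0,1,2,\dots$, recursively by $Q_1(0)=I$ and $Q_{r+1}(r\sigma)=A_0Q_r((r-1)\sigma)+Q_r((r-1)\sigma)A_1$ for $r\ge 1$. Define $Z:\mathbb{R}\to\mathbb{R}^{d\times d}$ by $Z(\vartheta)=\Theta$ for $\vartheta<-\sigma$, and, for each integer $u\ge 0$ and $\vartheta\in[(u-1)\sigma,u\sigma)$, \[ Z(\vartheta)=\sum_{r=0}^{u}Q_{r+1}(r\sigma)\frac{(\vartheta-(r-1)\sigma)^r}{r!} \] (so $Z(\vartheta)=I$ on $[-\sigma,0)$, $Z(\vartheta)=I+Q_2(\sigma)\vartheta$ on $[0,\sigma)$, etc.). *)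

From HB Require Import structures.
From mathcomp Require Import all_boot all_order all_algebra.
From mathcomp Require Import all_classical all_reals all_analysis.
Set Implicit Arguments. Unset Strict Implicit. Unset Printing Implicit Defensive.
Import Order.TTheory GRing.Theory Num.Theory.
Import numFieldNormedType.Exports.
Local Open Scope ring_scope.

(* Qmat A0 A1 r  represents  Q_{r+1}(r sigma) of the paper:
   Q_1(0) = I,  Q_{r+1}(r sigma) = A0 Q_r((r-1)sigma) + Q_r((r-1)sigma) A1. *)
Fixpoint Qmat (R : ringType) (d : nat) (A0 A1 : 'M[R]_d) (r : nat) : 'M[R]_d :=
  match r with
  | 0 => 1%:M
  | r'.+1 => A0 *m Qmat A0 A1 r' + Qmat A0 A1 r' *m A1
  end.

(* On [(u-1)σ, uσ) the function Z is the matrix polynomial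
   Zpiece u x = Σ_{r<=u} (x - (r-1)σ)^r / r! · Q_{r+1}(rσ).
   The derivative of the (r+1)-st coefficient is the r-th coefficient delayed
   by σ, so the recursion defining Q turns the derivative of Zpiece (u+1) at t
   into A0 Zpiece u (t-σ) + Zpiece u (t-σ) A1, and t - σ lies in the previous
   interval, where Z = Zpiece u; left of -σ both sides vanish.  As the
   intervals are closed on the left, this gives the right derivative
   everywhere, and the two-sided one at interior points, i.e. off the kσ. *)

From HB Require Import structures.
From mathcomp Require Import all_boot all_order all_algebra.
From mathcomp Require Import all_classical all_reals all_analysis.
From mathcomp Require Import ring lra.
Import Order.TTheory GRing.Theory Num.Theory.
Import numFieldNormedType.Exports.
Local Open Scope ring_scope.
Local Open Scope classical_set_scope.

Section derive_scalel.
Context {R : numFieldType} {V W : normedModType R}.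

Lemma is_derive_scalel (g : V -> R^o) (a : W) (x v : V) (dg : R) :
  is_derive x v g dg -> is_derive x v (fun y => g y *: a) (dg *: a).
Proof.
move=> [gv <-].
have quot : (fun h : R => h^-1 *: (g (h *: v + x) *: a - g x *: a)) @ 0^'
    --> 'D_v g x *: a.
  rewrite (_ : (fun h => _) = (fun h => (h^-1 *: (g (h *: v + x) - g x)) *: a)).
    exact: cvgZr_tmp.
  by apply/funext => h; rewrite -scalerBl scalerA.
by apply: DeriveDef; [apply/cvg_ex; exists ('D_v g x *: a) | exact: cvg_lim].
Qed.

End derive_scalel.

Section derive_piecewise.
Context {R : realFieldType} {W : normedModType R}.
Implicit Types (f g : R -> W) (a b t : R) (l : W).

Lemma is_derive_cvg_right {f g a b t l} : a <= t -> t < b ->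
  {in `[a, b[%R, f =1 g} -> is_derive t 1 g l ->
  (fun h => h^-1 *: (f (t + h) - f t)) @ 0^'+ --> l.
Proof.
move=> a_le_t t_lt_b fg [dg <-].
have right_quot : (fun h => h^-1 *: (g (h *: 1 + t) - g t)) @ 0^'+ --> 'D_1 g t.
  by move=> A /dg; apply: within_subset => h; exact: lt0r_neq0.
apply: cvg_trans right_quot; apply: near_eq_cvg; near=> h.
have h_gt0 : 0 < h by near: h; exact: nbhs_right_gt.
have h_lt_bt : h < b - t by near: h; apply: nbhs_right_lt; rewrite subr_gt0.
have t_in : t \in `[a, b[%R by rewrite in_itv /= a_le_t.
have th_in : t + h \in `[a, b[%R by rewrite in_itv /=; apply/andP; split; lra.
have -> : h%:A = h by rewrite /GRing.scale /= mulr1.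
by rewrite /= !fg // (addrC h t).
Unshelve. all: by end_near. Qed.

Lemma is_derive_eq_itvoo {f g a b t l} : t \in `]a, b[%R ->
  {in `]a, b[%R, f =1 g} -> is_derive t 1 g l -> is_derive t 1 f l.
Proof.
move=> tab fg; apply: near_eq_is_derive.
by near=> x; rewrite fg //; near: x; exact: near_in_itvoo.
Unshelve. all: by end_near. Qed.

End derive_piecewise.

Section delay_pieces.
Context {R : realFieldType} {d : nat} (sigma : R) (A0 A1 : 'M[R]_d).

Definition Zcoef (r : nat) (x : R) : R :=
  (x - (r%:R - 1) * sigma) ^+ r / (r`!)%:R.

Definition Zpiece (u : nat) (x : R) : 'M[R]_d :=
  \sum_(r < u.+1) Zcoef r x *: Qmat A0 A1 r.

Lemma Zcoef0 (x : R) : Zcoef 0 x = 1.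
Proof. by rewrite /Zcoef expr0 divr1. Qed.

Lemma Zpiece0 : Zpiece 0 = cst 1%:M.
Proof. by apply/funext => x; rewrite /Zpiece big_ord1 Zcoef0 scale1r. Qed.

Lemma is_derive_ZcoefS (r : nat) (t : R) :
  is_derive t 1 (Zcoef r.+1) (Zcoef r (t - sigma)).
Proof.
set c := (r.+1%:R - 1) * sigma.
have -> : Zcoef r.+1 = (r.+1`!)%:R^-1 \*: (shift (- c)) ^+ r.+1.
  by apply/funext => x; rewrite /Zcoef /= exprfctE mulrC.
rewrite (_ : Zcoef r _ = (r.+1`!)%:R^-1 *: (r.+1%:R * (t - c) ^+ r)); last first.
  rewrite /Zcoef /c factS natrM -addn1 natrD /=.
  have r1_neq0 : (r%:R + 1 : R) != 0 by rewrite natr1 pnatr_eq0.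
  have fact_neq0 : ((r`!)%:R : R) != 0 by rewrite pnatr_eq0 -lt0n fact_gt0.
  have -> : t - sigma - (r%:R - 1) * sigma = t - (r%:R + 1 - 1) * sigma by ring.
  rewrite /GRing.scale /=; field; by rewrite r1_neq0 fact_neq0.
apply: is_deriveZ.
have := is_deriveX r.+1 (is_derive_shift t 1 (- c)).
by rewrite /GRing.scale /= mulr1.
Qed.

Lemma is_derive_ZpieceS (u : nat) (t : R) :
  is_derive t 1 (Zpiece u.+1)
    (A0 *m Zpiece u (t - sigma) + Zpiece u (t - sigma) *m A1).
Proof.
have -> : Zpiece u.+1 =
    cst 1%:M + \sum_(r < u.+1) (fun x => Zcoef r.+1 x *: Qmat A0 A1 r.+1).
  by apply/funext => x; rewrite fct_sumE /Zpiece big_ord_recl Zcoef0 scale1r.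
have -> : A0 *m Zpiece u (t - sigma) + Zpiece u (t - sigma) *m A1 =
    0 + \sum_(r < u.+1) Zcoef r (t - sigma) *: Qmat A0 A1 r.+1.
  rewrite add0r /Zpiece mulmx_sumr mulmx_suml -big_split /=.
  by apply: eq_bigr => r _; rewrite scalerDr scalemxAr scalemxAl.
apply: is_deriveD; apply: is_derive_sum => r.
exact: is_derive_scalel (is_derive_ZcoefS r t).
Qed.

End delay_pieces.

Section delay_solution.
Context {R : realType} {d : nat} {sigma : R} {A0 A1 : 'M[R]_d} {Z : R -> 'M[R]_d}.
Hypothesis sigma_gt0 : 0 < sigma.
Hypothesis Z_left : forall t, t < - sigma -> Z t = 0.
Hypothesis Z_step : forall (u : nat) (t : R),
  (u%:R - 1) * sigma <= t -> t < u%:R * sigma -> Z t = Zpiece sigma A0 A1 u t.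

Local Notation rhs t := (A0 *m Z (t - sigma) + Z (t - sigma) *m A1).

Lemma step_index (t : R) : - sigma <= t ->
  exists u : nat, (u%:R - 1) * sigma <= t < u%:R * sigma.
Proof.
move=> t_ge; set y := t / sigma + 1.
have t_eq : t = (y - 1) * sigma by rewrite /y addrK divfK ?gt_eqF.
have y_ge0 : 0 <= y.
  by rewrite -lerBlDr sub0r ler_pdivlMr // mulN1r.
exists (Num.truncn y); have /andP[lo hi] := truncn_itv y_ge0.
rewrite t_eq ler_pM2r // ltr_pM2r // -natr1 in hi *; apply/andP; split; lra.
Qed.

Lemma is_derive_Zpiece_step (u : nat) (t : R) :
  (u%:R - 1) * sigma <= t -> t < u%:R * sigma ->
  is_derive t 1 (Zpiece sigma A0 A1 u) (rhs t).
Proof.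
case: u => [|u] lo hi.
  have Z_delayed : Z (t - sigma) = 0 by apply: Z_left; rewrite mul0r in hi; lra.
  by rewrite Zpiece0 Z_delayed mulmx0 mul0mx addr0; exact: is_derive_cst.
rewrite -natr1 in lo hi.
by rewrite (Z_step u (t - sigma)); [exact: is_derive_ZpieceS | nra | nra].
Qed.

Lemma Z_local_model (t : R) : exists g a b, [/\ a <= t < b,
  {in `[a, b[%R, Z =1 g}, is_derive t 1 g (rhs t) &
  (forall k : int, -1 <= k -> t != k%:~R * sigma) -> a < t].
Proof.
have [t_lt | t_ge] := ltP t (- sigma).
  exists (cst 0), (t - 1), (- sigma); split.
  - by rewrite t_lt andbT lerBlDr lerDl.
  - by move=> x /[!in_itv] /andP[_ x_lt]; exact: Z_left.
  - have Z_delayed : Z (t - sigma) = 0 by apply: Z_left; have := sigma_gt0; lra.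
    by rewrite Z_delayed mulmx0 mul0mx addr0; exact: is_derive_cst.
  - by rewrite ltrBlDr ltrDl.
have /step_index[u /andP[lo hi]] := t_ge.
exists (Zpiece sigma A0 A1 u), ((u%:R - 1) * sigma), (u%:R * sigma); split.
- by rewrite lo hi.
- by move=> x /[!in_itv] /andP[]; exact: Z_step.
- exact: is_derive_Zpiece_step.
- move=> t_off; rewrite lt_neqAle lo andbT eq_sym.
  by have := t_off (u%:Z - 1); rewrite intrB; apply; rewrite lerBrDr addNr.
Qed.

End delay_solution.

Theorem theorem1 (R : realType) (d : nat) (hd : (0 < d)%N) (sigma : R)
  (hsigma : 0 < sigma) (A0 A1 : 'M[R]_d) (Z : R -> 'M[R]_d)
  (HZneg : forall t, t < - sigma -> Z t = 0)
  (HZu : forall (u : nat) (t : R),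
      (u%:R - 1) * sigma <= t -> t < u%:R * sigma ->
      Z t = \sum_(r < u.+1)
              (((t - (r%:R - 1) * sigma) ^+ r / (r`!)%:R) *: Qmat A0 A1 r)) :
  (* right-hand derivative at every point *)
  (forall t : R,
      (fun h : R => h^-1 *: (Z (t + h) - Z t)) @ 0^'+ -->
        (A0 *m Z (t - sigma) + Z (t - sigma) *m A1))
  /\
  (* ordinary two-sided derivative away from the points k sigma, k >= -1 *)
  (forall t : R, (forall k : int, (-1 <= k)%R -> t != k%:~R * sigma) ->
      derivable Z t 1 /\
      'D_1 Z t = A0 *m Z (t - sigma) + Z (t - sigma) *m A1).
Proof.
have model := Z_local_model hsigma HZneg HZu.
split=> [t | t t_off]; have [g [a [b [/andP[a_le_t t_lt_b] Zg dg a_lt_t]]]] := model t.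
  exact: is_derive_cvg_right a_le_t t_lt_b Zg dg.
have Zg_open : {in `]a, b[%R, Z =1 g}.
  by move=> x /[!in_itv] /andP[/ltW a_le_x x_lt_b]; apply: Zg; rewrite in_itv /= a_le_x.
have t_in : t \in `]a, b[%R by rewrite in_itv /= a_lt_t.
have dZ := is_derive_eq_itvoo t_in Zg_open dg.
by split; [exact: ex_derive | exact: derive_val].
Qed.
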